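(* Let $I$ be a non-empty upward directed set with no maximal element. For $\alpha\in I$ let $E_\alpha$ be the set of tuples $(\alpha_1,\alpha_2,\dots,\alpha_{2n-1},\alpha_{2n})$ ($n\ge1$) of elements of $I$ such that (i) $\alpha_{2n-1}=\alpha$; (ii) $\alpha_{2i-1}\le\alpha_{2i}$ for all $1\le i\le n$; (iii) $\alpha_{2i-1}\not\le\alpha_{2j-1}$ for all $1\le j<i\le n$. For $\alpha\le\beta$ and $(\beta_1,\dots,\beta_{2m})\in E_\beta$, let $j$ be the smallest index with $\alpha\le\beta_{2j-1}$ and set $\epsilon_{\alpha\beta}(\beta_1,\dots,\beta_{2m})=(\beta_1,\dots,\beta_{2j-2},\alpha,\beta_{2j})$. Then each $E_\alpha$ is non-empty, $\epsilon_{\alpha\beta}$ is a well-defined map $E_\beta\to E_\alpha$, $\{E_\alpha,\epsilon_{\alpha\beta}\}$ is an $I$-inverse system, and every $\epsilon_{\alpha\beta}$ is surjective.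
   Context: An $I$-inverse system consists of sets $E_\alpha$ ($\alpha\in I$) and maps $\epsilon_{\alpha\beta}:E_\beta\to E_\alpha$ for $\alpha\le\beta$ with $\epsilon_{\alpha\alpha}=\mathrm{id}$ and $\epsilon_{\alpha\beta}\epsilon_{\beta\gamma}=\epsilon_{\alpha\gamma}$. *)

From mathcomp Require Import all_boot.
Set Implicit Arguments. Unset Strict Implicit. Unset Printing Implicit Defensive.

(* A tuple (a_1, a_2, ..., a_{2n-1}, a_{2n}) of elements of I (n >= 1) is
   encoded as the nonempty list of pairs [:: (a_1,a_2); ...; (a_{2n-1},a_{2n})].
   The order on I is a boolean relation [le]. *)

Section Sys.
Variable I : Type.
Variable le : rel I.

(* Membership in E_alpha. Index k (0-based) of the list corresponds to the
   pair (a_{2k+1}, a_{2k+2}). *)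
Definition E_set (alpha : I) (s : seq (I * I)) : Prop :=
  [/\ s <> [::],
      (last (alpha, alpha) s).1 = alpha,
      (forall k, k < size s -> le (nth (alpha, alpha) s k).1 (nth (alpha, alpha) s k).2)
    & (forall j i, j < i -> i < size s ->
          ~~ le (nth (alpha, alpha) s i).1 (nth (alpha, alpha) s j).1)].

(* epsilon_{alpha beta}: with j the first (0-based) index such that
   alpha <= beta_{2j+1}, keep the pairs before j and replace pair j by
   (alpha, beta_{2j+2}), dropping the rest.  The formula does not depend
   on beta except through the domain E_beta. *)
Definition eps (alpha beta : I) (s : seq (I * I)) : seq (I * I) :=
  let j := find (fun p => le alpha p.1) s in
  rcons (take j s) (alpha, (nth (alpha, alpha) s j).2).

End Sys.

Definition directed (I : Type) (le : rel I) : Prop :=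
  forall x y : I, exists z, le x z /\ le y z.

(* x is maximal iff x <= y implies y <= x (preorder notion; for a partial
   order this is the usual one). *)
Definition no_maximal (I : Type) (le : rel I) : Prop :=
  forall x : I, exists y, le x y /\ ~~ le y x.

From mathcomp Require Import all_boot.

(* The proof avoids all index arithmetic by viewing a tuple as a list of
   pairs and splitting it at the first pair whose first component lies
   above alpha.
   - Conditions (ii) and (iii) say that the list is [admissible]: every pair
     is increasing and the list is [pairwise] "no later first component
     lies above an earlier one".  Hence an element of E_alpha is exactly
     [rcons t (alpha, b)] with [t] admissible, [alpha <= b] and no first
     component of [t] above [alpha] (lemma [E_set_rcons]).
   - [eps alpha] only looks at the first pair [p] with [alpha <= p.1]:
     splitting [s = t ++ p :: u] there gives [eps alpha s = rcons t (alpha, p.2)]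
     ([eps_split]); more generally [eps] commutes with concatenation
     ([eps_catl], [eps_catr]).
   From these descriptions, well-definedness, functoriality and surjectivity
   of the maps are short case analyses. *)

Section InverseSystem.

Variables (I : Type) (le : rel I).

(* Conditions (ii) and (iii) of the definition of E_alpha. *)
Definition admissible (s : seq (I * I)) : bool :=
  all (fun p => le p.1 p.2) s && pairwise (fun p q => ~~ le q.1 p.1) s.

Lemma E_setE a s :
  E_set le a s <-> [/\ s <> [::], (last (a, a) s).1 = a & admissible s].
Proof.
split.
- case=> nz hlast hpair hfirst; split => //; apply/andP; split.
    by apply/(all_nthP (a, a)).
  by apply/(pairwiseP (a, a)) => j i hj hi ji; apply: hfirst.
- case=> nz hlast /andP[/(all_nthP (a, a)) hpair /(pairwiseP (a, a)) hfirst].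
  split => // j i ji hi; apply: hfirst => //; exact: ltn_trans ji hi.
Qed.

Lemma admissible_rcons t p :
  admissible (rcons t p) =
  [&& le p.1 p.2, ~~ has (fun q => le p.1 q.1) t & admissible t].
Proof.
rewrite /admissible all_rcons pairwise_rcons -all_predC -!andbA.
by congr (_ && _); rewrite andbCA.
Qed.

Lemma admissible_catl s1 s2 : admissible (s1 ++ s2) -> admissible s1.
Proof.
by rewrite /admissible all_cat pairwise_cat => /andP[/andP[-> _] /and3P[_ -> _]].
Qed.

Lemma E_set_rcons a t b :
  E_set le a (rcons t (a, b)) <->
  [/\ le a b, ~~ has (fun q => le a q.1) t & admissible t].
Proof.
split=> [/E_setE[_ _] | [hab ht adt]].
  by rewrite admissible_rcons => /and3P[].
apply/E_setE; split; first by case: t {ht adt}.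
  by rewrite last_rcons.
by rewrite admissible_rcons hab ht adt.
Qed.

Lemma E_set_rconsP {a s} : E_set le a s -> exists t b, s = rcons t (a, b).
Proof.
case/E_setE=> nz hlast _.
case/lastP: s nz hlast => [// | t [x b]] _; rewrite last_rcons /= => ->.
by exists t, b.
Qed.

Lemma eps_head a b p u : le a p.1 -> eps le a b (p :: u) = [:: (a, p.2)].
Proof. by move=> hp; rewrite /eps /= hp. Qed.

Lemma eps_catl a b t u :
  has (fun q => le a q.1) t -> eps le a b (t ++ u) = eps le a b t.
Proof.
by move=> ht; rewrite /eps find_cat ht take_cat nth_cat -has_find ht.
Qed.

Lemma eps_catr a b t u :
  ~~ has (fun q => le a q.1) t -> eps le a b (t ++ u) = t ++ eps le a b u.
Proof.
move=> /negbTE ht.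
by rewrite /eps find_cat ht take_cat nth_cat ltnNge leq_addr addKn rcons_cat.
Qed.

Lemma eps_split a b t p u :
  ~~ has (fun q => le a q.1) t -> le a p.1 ->
  eps le a b (t ++ p :: u) = rcons t (a, p.2).
Proof. by move=> ht hp; rewrite eps_catr // eps_head // cats1. Qed.

Hypothesis le_refl : forall x, le x x.
Hypothesis le_trans : forall x y z, le x y -> le y z -> le x z.

Lemma E_set_split {a b s} : le a b -> E_set le b s ->
  exists t p u,
    [/\ s = t ++ p :: u, le a p.1 & ~~ has (fun q => le a q.1) t].
Proof.
move=> hab Es.
have hs : has (fun q => le a q.1) s.
  by have [t [c ->]] := E_set_rconsP Es; rewrite has_rcons /= hab.
case: (split_find hs) Es => p t u hp ht _.
by exists t, p, u; rewrite cat_rcons.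
Qed.

Lemma E_set_singleton a : E_set le a [:: (a, a)].
Proof. exact/(E_set_rcons a [::] a). Qed.

Lemma eps_E_set a b :
  le a b -> forall s, E_set le b s -> E_set le a (eps le a b s).
Proof.
move=> hab s Es; have [t [p [u [Ds hp ht]]]] := E_set_split hab Es.
have /E_setE[_ _ adm] := Es.
have : admissible (rcons t p).
  by apply: (admissible_catl _ u); rewrite cat_rcons -Ds.
rewrite admissible_rcons => /and3P[hp2 _ adt].
rewrite Ds eps_split //; apply/E_set_rcons; split => //.
exact: le_trans hp hp2.
Qed.

Lemma eps_id a s : E_set le a s -> eps le a a s = s.
Proof.
move=> Es; have [t [b Ds]] := E_set_rconsP Es; subst s.
case/E_set_rcons: Es => _ ht _.
by rewrite -cats1 eps_split ?cats1 //; apply: le_refl.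
Qed.

Lemma eps_comp a b c : le a b -> le b c ->
  forall s, E_set le c s -> eps le a b (eps le b c s) = eps le a c s.
Proof.
move=> hab hbc s Es; have [t [p [u [-> hp ht]]]] := E_set_split hbc Es.
rewrite eps_split // -cats1.
have [hat | hat] := boolP (has (fun q => le a q.1) t).
  by rewrite !eps_catl.
rewrite !eps_catr // !eps_head //; exact: le_trans hab hp.
Qed.

(* Surjectivity: a preimage of (t', (alpha, c)) is obtained by replacing
   alpha with beta when beta <= alpha, and by appending (beta, beta)
   otherwise. *)
Lemma eps_surj a b : le a b ->
  forall t, E_set le a t -> exists s, E_set le b s /\ eps le a b s = t.
Proof.
move=> hab t Et; have [t' [c Dt]] := E_set_rconsP Et; subst t.
case/E_set_rcons: Et => hac ht' adt'.
have hbt' : ~~ has (fun q => le b q.1) t'.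
  by apply: contra ht'; apply: sub_has => q; apply: le_trans.
have [hba | hba] := boolP (le b a).
  exists (rcons t' (b, c)); split.
    by apply/E_set_rcons; split => //; exact: le_trans hba hac.
  by rewrite -!cats1 eps_split // cats1.
exists (rcons (rcons t' (a, c)) (b, b)); split.
  apply/E_set_rcons; split => //.
    by rewrite has_rcons /= negb_or hba.
  by rewrite admissible_rcons hac ht'.
by rewrite -!cats1 -catA eps_split // cats1.
Qed.

End InverseSystem.

Theorem mainTheorem3 (I : Type) (le : rel I)
  (le_refl : forall x, le x x)
  (le_trans : forall x y z, le x y -> le y z -> le x z)
  (I_nonempty : inhabited I)
  (I_directed : directed le)
  (I_nomax : no_maximal le) :
  (* each E_alpha is non-empty *)
  (forall alpha, exists s, E_set le alpha s) /\
  (* epsilon_{alpha beta} maps E_beta into E_alpha *)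
  (forall alpha beta, le alpha beta ->
     forall s, E_set le beta s -> E_set le alpha (eps le alpha beta s)) /\
  (* epsilon_{alpha alpha} = id on E_alpha *)
  (forall alpha s, E_set le alpha s -> eps le alpha alpha s = s) /\
  (* epsilon_{alpha beta} o epsilon_{beta gamma} = epsilon_{alpha gamma} on E_gamma *)
  (forall alpha beta gamma, le alpha beta -> le beta gamma ->
     forall s, E_set le gamma s ->
       eps le alpha beta (eps le beta gamma s) = eps le alpha gamma s) /\
  (* every epsilon_{alpha beta} : E_beta -> E_alpha is surjective *)
  (forall alpha beta, le alpha beta ->
     forall t, E_set le alpha t ->
       exists s, E_set le beta s /\ eps le alpha beta s = t).
Proof.
split; first by move=> a; exists [:: (a, a)]; exact: E_set_singleton.
split; first exact: eps_E_set _ _ le_trans.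
split; first exact: eps_id _ _ le_refl.
split; first exact: eps_comp _ _ le_trans.
exact: eps_surj _ _ le_trans.
Qed.
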